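(* Let $N\ge 2$ vehicles, with positions $x_1(t),\dots,x_N(t)$, travel without overtaking on a ring road of length $L>0$; vehicle $N$ is the platoon leader, and vehicle $1$ is the vehicle directly ahead of the leader around the ring, at distance $x_1+L-x_N$. Let $a>0$, and let $V$ be an optimal velocity function, differentiable at $h=L/N$ with $V'(h)>0$. Suppose the dynamics are $$\ddot{x}_i(t)=a\left[V\!\left(\frac{x_N(t)-x_i(t)}{N-i}\right)-\dot{x}_i(t)\right],\qquad i=1,\dots,N-1,$$ $$\ddot{x}_N(t)=a\left[V\big(x_1(t)+L-x_N(t)\big)-\dot{x}_N(t)\right].$$ Then this system is linearly stable about the uniform-flow equilibrium $e_i(t)=hi+V(h)t$ for every $a>0$. No condition on $a$ beyond positivity is needed.
   Context: Write $x_i(t)=e_i(t)+y_i(t)$ and linearize the system in the small perturbations $y_i$. The system is called linearly stable if every characteristic root $\lambda$ of this linearized system, i.e. every $\lambda$ admitting a solution of the form $y_i(t)=\xi_i e^{\lambda t}$ with $(\xi_1,\dots,\xi_N)\neq 0$, satisfies $\operatorname{Re}\lambda<0$. The single exception is the root $\lambda=0$, which corresponds to uniform translations $y_1=\dots=y_N=\text{const}$, i.e. perturbations that leave all spacings unchanged. *)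

From Stdlib Require Import Reals Lra Lia.
From Coquelicot Require Import Coquelicot.

Open Scope R_scope.

Definition spacing (N : nat) (L : R) : R := L / INR N.

(* Characteristic equation of the system linearized about the uniform flow
   e_i(t) = h i + V(h) t, h = L/N, with b = V'(h):
     y_i'' = a [ b (y_N - y_i)/(N-i) - y_i' ]   (1 <= i <= N-1)
     y_N'' = a [ b (y_1 - y_N)       - y_N' ]
   (note e_1 + L - e_N = h since L = N h).  Substituting y_i(t) = xi_i e^{lam t}
   gives the algebraic system below.  Indices run over 1..N. *)
Definition char_root (N : nat) (L a : R) (V : R -> R) (lam : C) : Prop :=
  let b := Derive V (spacing N L) in
  exists xi : nat -> C,
    (exists i : nat, (1 <= i <= N)%nat /\ xi i <> 0%C) /\
    (forall i : nat, (1 <= i <= N - 1)%nat ->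
       (lam * lam * xi i =
        RtoC a * (RtoC b * (xi N - xi i) / RtoC (INR (N - i)) - lam * xi i))%C) /\
    (lam * lam * xi N =
     RtoC a * (RtoC b * (xi 1%nat - xi N) - lam * xi N))%C.

(* Linear stability: every characteristic root has negative real part,
   except the root 0 (uniform translations). *)
Definition linearly_stable (N : nat) (L a : R) (V : R -> R) : Prop :=
  forall lam : C, char_root N L a V lam -> lam = 0%C \/ Re lam < 0.

(** Writing [P = lam^2 + a lam], follower [i] obeys
    [(P + a g_i) xi_i = a g_i xi_N] with gain [g_i = b/(N-i) > 0], and the
    leader obeys [(P + a b) xi_N = a b xi_1].  If [xi_N = 0], some follower is
    excited on its own, so [lam^2 + a lam + a g_i = 0].  Otherwise the closed
    loop leader -> vehicle 1 -> leader forces [P (P + a g_1 + a b) = 0].  In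
    every case [lam] solves [lam^2 + a lam + k = 0] with [a > 0] and [k >= 0],
    whose roots are [0] or lie in the open left half-plane. *)

From Stdlib Require Import Reals Lra Lia.
From Coquelicot Require Import Coquelicot.

Open Scope R_scope.

Lemma Cmult_eq_0 (z1 z2 : C) : (z1 * z2 = 0)%C -> z1 = 0%C \/ z2 = 0%C.
Proof.
  intros H.
  destruct (Ceq_dec z1 0) as [H1|H1]; [now left|].
  destruct (Ceq_dec z2 0) as [H2|H2]; [now right|].
  now destruct (Cmult_neq_0 z1 z2 H1 H2).
Qed.

Lemma RtoC_neq_0 (x : R) : x <> 0 -> RtoC x <> 0%C.
Proof. intros Hx H. injection H. exact Hx. Qed.

Lemma damped_quadratic_root (a k : R) (lam : C) : 0 < a -> 0 <= k ->
  (lam * lam + RtoC a * lam + RtoC k = 0)%C -> lam = 0%C \/ Re lam < 0.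
Proof.
  intros Ha Hk H. destruct lam as [x y].
  assert (Hre := f_equal fst H). assert (Him := f_equal snd H).
  simpl in Hre, Him. unfold Re; simpl.
  destruct (Rlt_or_le x 0) as [Hx|Hx]; [now right|left].
  (* [Im] gives [y (2x + a) = 0], so [y = 0]; then [x^2 + a x + k = 0] forces [x = 0]. *)
  assert (y = 0) by nra. subst y.
  assert (x = 0) by nra. now subst x.
Qed.

Lemma relative_velocity_eq (a g : R) (lam x y : C) :
  (lam * lam * x = RtoC a * (RtoC g * (y - x) - lam * x))%C ->
  ((lam * lam + RtoC a * lam + RtoC (a * g)) * x = RtoC (a * g) * y)%C.
Proof.
  intros H. rewrite RtoC_mult.
  transitivity (lam * lam * x + RtoC a * lam * x + RtoC a * RtoC g * x)%C; [ring|].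
  rewrite H. ring.
Qed.

Lemma scaled_gain (b m : R) (z : C) : m <> 0 ->
  (RtoC b * z / RtoC m = RtoC (b / m) * z)%C.
Proof. intros Hm. rewrite RtoC_div by exact Hm. unfold Cdiv. ring. Qed.

Lemma coupled_pair_modes (P c d x y : C) :
  ((P + c) * x = c * y)%C -> ((P + d) * y = d * x)%C -> y <> 0%C ->
  P = 0%C \/ (P + c + d = 0)%C.
Proof.
  intros Hx Hy Hy0.
  assert (Hprod : (P * (P + c + d) * y = 0)%C).
  { transitivity ((P + c) * ((P + d) * y) - c * d * y)%C; [ring|].
    rewrite Hy.
    transitivity (d * ((P + c) * x) - c * d * y)%C; [ring|].
    rewrite Hx. ring. }
  destruct (Cmult_eq_0 _ _ Hprod) as [H|H]; [|contradiction].
  exact (Cmult_eq_0 _ _ H).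
Qed.

Theorem theorem3p2 (N : nat) (L a : R) (V : R -> R) :
  (2 <= N)%nat -> 0 < L -> 0 < a ->
  ex_derive V (spacing N L) -> 0 < Derive V (spacing N L) ->
  linearly_stable N L a V.
Proof.
  intros HN _ Ha _ Hb lam [xi [[i [Hi Hxi]] [Hfollow Hlead]]].
  set (b := Derive V (spacing N L)) in *.
  assert (Hgain : forall j, (1 <= j <= N - 1)%nat ->
    ((lam * lam + RtoC a * lam + RtoC (a * (b / INR (N - j)))) * xi j
     = RtoC (a * (b / INR (N - j))) * xi N)%C).
  { intros j Hj. apply relative_velocity_eq.
    rewrite <- scaled_gain by (apply not_0_INR; lia). exact (Hfollow j Hj). }
  assert (Hgain_pos : forall j, (j < N)%nat -> 0 <= a * (b / INR (N - j))).
  { intros j Hj. apply Rlt_le, Rmult_lt_0_compat, Rdiv_lt_0_compat;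
      [exact Ha | exact Hb | apply lt_0_INR; lia]. }
  destruct (Ceq_dec (xi N) 0) as [HxN|HxN].
  - assert (Hi' : (1 <= i <= N - 1)%nat)
      by (destruct (Nat.eq_dec i N); [subst; contradiction | lia]).
    apply (damped_quadratic_root a (a * (b / INR (N - i)))); [exact Ha | apply Hgain_pos; lia |].
    specialize (Hgain i Hi'). rewrite HxN, Cmult_0_r in Hgain.
    destruct (Cmult_eq_0 _ _ Hgain) as [H|H]; [exact H | contradiction].
  - apply relative_velocity_eq in Hlead.
    destruct (coupled_pair_modes _ _ _ _ _ (Hgain 1%nat ltac:(lia)) Hlead HxN) as [H|H].
    + apply (damped_quadratic_root a 0); [exact Ha | lra |].
      rewrite H. ring.
    + apply (damped_quadratic_root a (a * (b / INR (N - 1)) + a * b));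
        [exact Ha | pose proof (Hgain_pos 1%nat ltac:(lia)); nra |].
      rewrite RtoC_plus, <- H, RtoC_mult. ring.
Qed.
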